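(* Let $n$ be an odd prime and let $x,y,z$ be positive integers with $\gcd(x,y,z)=1$ satisfying $x^n + y^n = z^n$. Then: (i) every odd prime $p \mid x$ satisfies $\nu_p(z^{p-1} - y^{p-1}) \geq n - 1$; every odd prime $p \mid y$ satisfies $\nu_p(z^{p-1} - x^{p-1}) \geq n - 1$; every odd prime $p \mid z$ satisfies $\nu_p(x^{p-1} - y^{p-1}) \geq n - 1$; (ii) if moreover $n \nmid xyz$, then the lower bounds $n-1$ in (i) can be replaced by $n$; (iii) if $2 \mid z$ then $\nu_2(x + y) \geq n$; if $2 \mid x$ then $\nu_2(z - y) \geq n$; if $2 \mid y$ then $\nu_2(z - x) \geq n$; (iv) if a prime $p$ divides both $x$ and $z - y$, then $\nu_p(z - y) \geq n - 1$; if a prime $p$ divides both $y$ and $z - x$, then $\nu_p(z - x) \geq n - 1$; if a prime $p$ divides both $z$ and $x + y$, then $\nu_p(x + y) \geq n - 1$.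
   Context: For a prime $p$ and a nonzero integer $m$, $\nu_p(m)$ denotes the exponent of the exact power of $p$ dividing $m$ (the $p$-adic valuation). (The paper phrases (i) as: $p$ is a ''Wieferich prime to the base $(a,b)$ of order $r$'' when $p\nmid ab$ and $\nu_p(a^{p-1}-b^{p-1}) = r > 1$.) *)

From mathcomp Require Import all_boot all_order all_algebra.
Set Implicit Arguments. Unset Strict Implicit. Unset Printing Implicit Defensive.
Import Order.TTheory GRing.Theory Num.Theory.

(* p-adic valuation of an integer m: exponent of p in |m|.
   (Only ever applied where m is nonzero in the intended use; for m = 0
   mathcomp's logn gives 0.) *)
Definition nu (p : nat) (m : int) : nat := logn p `|m|%N.

(* Let p be a prime dividing A - B but not B.  Expanding A = B + (A - B),
   A^n - B^n = (A - B) S with S = n B^(n-1) + (A - B) (C(n,2) B^(n-2) + ...),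
   so p does not divide S unless p = n, and then p^2 does not since p | C(n,2).
   Hence nu_p(A^n - B^n) <= nu_p(A - B) + [p = n].
   Each rearrangement a^n - b^n = c^n of x^n + y^n = z^n, with (a, b, c) one
   of (z, y, x), (z, x, y), (x, -y, z), has b coprime to c.  For p | c the left
   side is then at least n, both for (A, B) = (a, b) and for
   (A, B) = (a^(p-1), b^(p-1)): here p | A - B by Fermat's little theorem and
   a^n - b^n divides A^n - B^n.  For p = 2, a and b are odd, so 2 | a - b. *)

From mathcomp Require Import all_boot all_order all_algebra cyclic.
From mathcomp Require Import ring zify.
Set Implicit Arguments.
Unset Strict Implicit.
Unset Printing Implicit Defensive.
Import Order.TTheory GRing.Theory Num.Theory.
Local Open Scope ring_scope.

Lemma subrX_cofactor (R : comPzRingType) (a b : R) n : exists d,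
  a ^+ n - b ^+ n = (a - b) *
    (n%:R * b ^+ n.-1 + (a - b) * ('C(n, 2)%:R * b ^+ n.-2 + (a - b) * d)).
Proof.
case: n => [|[|k]]; try by exists 0; rewrite bin_small //=; ring.
elim: k => [|k [d IH]] /=; first by exists 0; rewrite binn; ring.
exists ('C(k.+2, 2)%:R * b ^+ k + a * d).
have -> : a ^+ k.+3 - b ^+ k.+3 =
    a * (a ^+ k.+2 - b ^+ k.+2) + (a - b) * b ^+ k.+2 by rewrite !exprS; ring.
have -> : 'C(k.+3, 2) = ('C(k.+2, 2) + k.+2)%N by rewrite binS bin1.
by rewrite IH /= natrD !exprS; ring.
Qed.

Lemma exprN_odd (R : pzRingType) (x : R) k : odd k -> (- x) ^+ k = - x ^+ k.
Proof. by move=> ok; rewrite exprNn -signr_odd ok mulN1r. Qed.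

Lemma pfactor_dvdz p k (m : int) :
  prime p -> m != 0 -> (p%:Z ^+ k %| m)%Z = (k <= nu p m)%N.
Proof. by move=> pp m0; rewrite dvdzE abszX pfactor_dvdn // absz_gt0. Qed.

Lemma nuM p (m1 m2 : int) :
  m1 != 0 -> m2 != 0 -> nu p (m1 * m2) = (nu p m1 + nu p m2)%N.
Proof. by move=> m10 m20; rewrite /nu abszM lognM // absz_gt0. Qed.

Lemma Euclidz_dvdX p (m : int) k :
  prime p -> (p%:Z %| m ^+ k)%Z = (p%:Z %| m)%Z && (0 < k)%N.
Proof. by move=> pp; rewrite !dvdzE abszX Euclid_dvdX. Qed.

Lemma Euclidz_dvdM p (m1 m2 : int) :
  prime p -> (p%:Z %| m1 * m2)%Z = (p%:Z %| m1)%Z || (p%:Z %| m2)%Z.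
Proof. by move=> pp; rewrite !dvdzE abszM Euclid_dvdM. Qed.

Lemma expr_even_absz (a : int) k : ~~ odd k -> a ^+ k = (`|a| ^ k)%:Z.
Proof. by move=> ek; rewrite -abszX abszE ger0_norm // exprn_even_ge0. Qed.

Lemma fermat_littlez p (a : int) : prime p -> odd p -> ~~ (p%:Z %| a)%Z ->
  (a ^+ (p - 1) = 1 %[mod p])%Z.
Proof.
move=> pp op pa; have ep : ~~ odd (p - 1).
  by move: op; rewrite -(prednK (prime_gt0 pp)) subn1.
rewrite expr_even_absz // -[1]/(1%N%:Z) !modz_nat subn1 -totient_prime //.
by rewrite Euler_exp_totient // coprime_sym prime_coprime -?dvdzE.
Qed.

Lemma dvdz2_sub (m1 m2 : int) :
  ~~ (2%:Z %| m1)%Z -> ~~ (2%:Z %| m2)%Z -> (2%:Z %| m1 - m2)%Z.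
Proof. lia. Qed.

Lemma subrX_cofactor_ndvd p n (B t d : int) :
  prime p -> prime n -> odd n -> (p%:Z %| t)%Z -> ~~ (p%:Z %| B)%Z ->
  ~~ (p%:Z ^+ (p == n).+1 %|
      n%:R * B ^+ n.-1 + t * ('C(n, 2)%:R * B ^+ n.-2 + t * d))%Z.
Proof.
move=> pp pn on pt pB; have pBX k : ~~ (p%:Z %| B ^+ k)%Z.
  by rewrite Euclidz_dvdX // negb_and pB.
have [pe|/eqP p_neq_n] := eqVneq p n.
- subst n; have p_gt2 : (2 < p)%N.
    by case: p pp pn on {pt pB pBX} => [|[|[|]]].
  have pC : (p%:Z %| 'C(p, 2)%:R)%Z.
    by rewrite natz dvdzE prime_dvd_bin // (ltn_trans _ p_gt2).
  have pt2 : (p%:Z ^+ 2 %| t * ('C(p, 2)%:R * B ^+ p.-2 + t * d))%Z.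
    by rewrite expr2 dvdz_mul // rpredD ?dvdz_mulr ?dvdz_mull.
  rewrite /= (rpredDr _ pt2) expr2 natz dvdz_mul2l //.
  by rewrite eqz_nat -lt0n prime_gt0.
- have pt1 : (p%:Z %| t * ('C(n, 2)%:R * B ^+ n.-2 + t * d))%Z.
    exact: dvdz_mulr.
  rewrite /= expr1 (rpredDr _ pt1) Euclidz_dvdM // negb_or pBX andbT.
  by rewrite natz dvdzE dvdn_prime2 //; apply/eqP.
Qed.

Lemma nu_subX_le p n (A B : int) :
  prime p -> prime n -> odd n -> (p%:Z %| A - B)%Z -> ~~ (p%:Z %| B)%Z ->
  (nu p (A ^+ n - B ^+ n) <= nu p (A - B) + (p == n))%N.
Proof.
move=> pp pn on pAB pB; have [d ->] := subrX_cofactor A B n.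
set S := (_%:R * _ + _); have S_ndvd : ~~ (p%:Z ^+ (p == n).+1 %| S)%Z.
  exact: subrX_cofactor_ndvd.
have [->|AB0] := eqVneq (A - B) 0; first by rewrite mul0r leq_addr.
have S0 : S != 0 by apply: contraNneq S_ndvd => ->; apply: dvdz0.
by rewrite nuM // leq_add2l leqNgt -pfactor_dvdz.
Qed.

Lemma leq_nu_sub_of_dvd_subX p n k (A B : int) :
  prime p -> prime n -> odd n -> (p%:Z %| A - B)%Z -> ~~ (p%:Z %| B)%Z ->
  A ^+ n != B ^+ n -> (p%:Z ^+ k %| A ^+ n - B ^+ n)%Z ->
  (k <= nu p (A - B) + (p == n))%N.
Proof.
move=> pp pn on pAB pB ABn pkAB.
apply: leq_trans (nu_subX_le pp pn on pAB pB).
by rewrite -pfactor_dvdz // subr_eq0.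
Qed.

Section FermatTriple.

Variables (n : nat) (a b c : int).
Hypotheses (n_prime : prime n) (n_odd : odd n).
Hypotheses (abc : a ^+ n - b ^+ n = c ^+ n) (c_neq0 : c != 0).
Hypothesis bc_coprime : coprime `|b| `|c|.

Section PrimeDivisor.

Variable p : nat.
Hypotheses (p_prime : prime p) (p_dvd_c : (p %| `|c|)%N).

Let p_ndvd_b : ~~ (p%:Z %| b)%Z.
Proof.
by rewrite dvdzE -prime_coprime // coprime_sym (coprime_dvdr p_dvd_c).
Qed.

Let p_ndvd_a : ~~ (p%:Z %| a)%Z.
Proof.
have ebn : b ^+ n = a ^+ n - c ^+ n by rewrite -abc; ring.
apply: contra p_ndvd_b => pa; have : (p%:Z %| b ^+ n)%Z.
  by rewrite ebn rpredB // dvdz_exp ?prime_gt0 // dvdzE.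
by rewrite Euclidz_dvdX // => /andP[].
Qed.

Let pn_dvd_subX : (p%:Z ^+ n %| a ^+ n - b ^+ n)%Z.
Proof. by rewrite abc dvdz_exp2r // dvdzE. Qed.

Let subX_neq0 : a ^+ n != b ^+ n.
Proof. by rewrite -subr_eq0 abc expf_eq0 negb_and c_neq0 orbT. Qed.

Lemma nu_sub_fermat : (p%:Z %| a - b)%Z -> (n <= nu p (a - b) + (p == n))%N.
Proof.
move=> pab; apply: leq_nu_sub_of_dvd_subX p_prime n_prime n_odd pab p_ndvd_b
  subX_neq0 pn_dvd_subX.
Qed.

Lemma nu2_sub_fermat : p = 2%N -> (n <= nu 2 (a - b))%N.
Proof.
move=> p2; have n_neq2 : (2 == n) = false by apply: contraTF n_odd => /eqP <-.
have := nu_sub_fermat; rewrite p2 n_neq2 addn0; apply.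
by apply: dvdz2_sub; rewrite -p2.
Qed.

Let absz_neq : odd p -> `|a|%N != `|b|%N.
Proof.
move=> p_odd; apply/negP => /eqP /(congr1 Posz); rewrite !abszE.
move/eqP; rewrite eqr_norm2 => /orP[] /eqP eab.
  by move: subX_neq0; rewrite eab eqxx.
have : (p%:Z %| b ^+ n * 2%:R)%Z.
  have -> : b ^+ n * 2%:R = - c ^+ n.
    by rewrite -abc eab exprN_odd //; ring.
  by rewrite rpredN dvdz_exp ?prime_gt0 // dvdzE.
rewrite Euclidz_dvdM // Euclidz_dvdX // (negbTE p_ndvd_b) natz.
by rewrite dvdzE !absz_nat dvdn_prime2 // => /eqP p2; rewrite p2 in p_odd.
Qed.

Lemma nu_subXX_fermat : odd p ->
  (n <= nu p ((`|a| ^ (p - 1))%:Z - (`|b| ^ (p - 1))%:Z) + (p == n))%N.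
Proof.
move=> p_odd; have ep : ~~ odd (p - 1).
  by move: p_odd; rewrite -(prednK (prime_gt0 p_prime)) subn1.
rewrite -!expr_even_absz //; apply: leq_nu_sub_of_dvd_subX => //.
- by rewrite -eqz_mod_dvd !fermat_littlez.
- by rewrite Euclidz_dvdX // negb_and p_ndvd_b.
- apply: contra_neq (absz_neq p_odd) => /(congr1 absz).
  rewrite !abszX -!expnM => /eqP; rewrite eqn_exp2r ?muln_gt0 => [/eqP //|].
  by rewrite subn_gt0 prime_gt1 // prime_gt0.
- by rewrite (exprAC a) (exprAC b) subrXX dvdz_mulr ?pn_dvd_subX.
Qed.

End PrimeDivisor.

Lemma fermat_triple_nu_bounds :
  [/\ forall p, prime p -> odd p -> (p %| `|c|)%N ->
        (n <= nu p ((`|a| ^ (p - 1))%:Z - (`|b| ^ (p - 1))%:Z) + (p == n))%N,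
      (2 %| `|c|)%N -> (n <= nu 2 (a - b))%N &
      forall p, prime p -> (p %| `|c|)%N -> (p%:Z %| a - b)%Z ->
        (n <= nu p (a - b) + (p == n))%N].
Proof.
split=> [p pp op pc|c2|p pp pc]; first exact: nu_subXX_fermat.
  exact: (nu2_sub_fermat _ c2).
exact: nu_sub_fermat.
Qed.

End FermatTriple.

Lemma fermat_coprime n x y z : (0 < n)%N -> gcdn (gcdn x y) z = 1%N ->
  (x ^ n + y ^ n = z ^ n)%N -> coprime x y /\ coprime y z.
Proof.
move=> n0 g1 E.
have gcd3_eq1 d : (d %| x)%N -> (d %| y)%N -> (d %| z)%N -> d == 1%N.
  by move=> dx dy dz; rewrite -dvdn1 -g1 !dvdn_gcd dx dy dz.
split; apply: gcd3_eq1; rewrite ?dvdn_gcdl ?dvdn_gcdr //.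
all: rewrite -(dvdn_pexp2r _ _ n0).
  by rewrite -E dvdn_add // dvdn_exp2r ?dvdn_gcdl ?dvdn_gcdr.
have -> : (x ^ n = z ^ n - y ^ n)%N by rewrite -E addnK.
by rewrite dvdn_sub // dvdn_exp2r ?dvdn_gcdl ?dvdn_gcdr.
Qed.

Theorem theorem1p4 (n x y z : nat) :
  prime n -> odd n ->
  (0 < x)%N -> (0 < y)%N -> (0 < z)%N ->
  gcdn (gcdn x y) z = 1%N ->
  (x ^ n + y ^ n = z ^ n)%N ->
  (* (i) *)
  [/\ (forall p : nat, prime p -> odd p -> (p %| x)%N ->
         (n - 1 <= nu p ((z ^ (p - 1))%:Z - (y ^ (p - 1))%:Z))%N),
      (forall p : nat, prime p -> odd p -> (p %| y)%N ->
         (n - 1 <= nu p ((z ^ (p - 1))%:Z - (x ^ (p - 1))%:Z))%N) &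
      (forall p : nat, prime p -> odd p -> (p %| z)%N ->
         (n - 1 <= nu p ((x ^ (p - 1))%:Z - (y ^ (p - 1))%:Z))%N)]
  /\
  (* (ii) *)
  (~~ (n %| x * y * z)%N ->
    [/\ (forall p : nat, prime p -> odd p -> (p %| x)%N ->
           (n <= nu p ((z ^ (p - 1))%:Z - (y ^ (p - 1))%:Z))%N),
        (forall p : nat, prime p -> odd p -> (p %| y)%N ->
           (n <= nu p ((z ^ (p - 1))%:Z - (x ^ (p - 1))%:Z))%N) &
        (forall p : nat, prime p -> odd p -> (p %| z)%N ->
           (n <= nu p ((x ^ (p - 1))%:Z - (y ^ (p - 1))%:Z))%N)])
  /\
  (* (iii) *)
  [/\ ((2 %| z)%N -> (n <= nu 2 (x%:Z + y%:Z))%N),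
      ((2 %| x)%N -> (n <= nu 2 (z%:Z - y%:Z))%N) &
      ((2 %| y)%N -> (n <= nu 2 (z%:Z - x%:Z))%N)]
  /\
  (* (iv) *)
  [/\ (forall p : nat, prime p -> (p %| x)%N -> (p%:Z %| z%:Z - y%:Z)%Z ->
         (n - 1 <= nu p (z%:Z - y%:Z))%N),
      (forall p : nat, prime p -> (p %| y)%N -> (p%:Z %| z%:Z - x%:Z)%Z ->
         (n - 1 <= nu p (z%:Z - x%:Z))%N) &
      (forall p : nat, prime p -> (p %| z)%N -> (p%:Z %| x%:Z + y%:Z)%Z ->
         (n - 1 <= nu p (x%:Z + y%:Z))%N)].
Proof.
move=> pn on x0 y0 z0 g1 E.
have [cxy cyz] := fermat_coprime (prime_gt0 pn) g1 E.
have cyx : coprime y x by rewrite coprime_sym.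
have cNyz : coprime `|- y%:Z| z by rewrite abszN.
have Ezn : z%:Z ^+ n = x%:Z ^+ n + y%:Z ^+ n.
  by rewrite -!natz -!natrX -natrD E.
have neq0 m : (0 < m)%N -> m%:Z != 0 by rewrite eqz_nat -lt0n.
have Ex : z%:Z ^+ n - y%:Z ^+ n = x%:Z ^+ n by rewrite Ezn addrK.
have Ey : z%:Z ^+ n - x%:Z ^+ n = y%:Z ^+ n by rewrite Ezn addrC addKr.
have Ez : x%:Z ^+ n - (- y%:Z) ^+ n = z%:Z ^+ n.
  by rewrite Ezn exprN_odd // opprK.
have [Ix IIIx IVx] := fermat_triple_nu_bounds pn on Ex (neq0 _ x0) cyx.
have [Iy IIIy IVy] := fermat_triple_nu_bounds pn on Ey (neq0 _ y0) cxy.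
have [Iz IIIz IVz] := fermat_triple_nu_bounds pn on Ez (neq0 _ z0) cNyz.
rewrite abszN in Iz; rewrite opprK in IIIz IVz.
have leq_subn1 m (e : bool) : (n <= m + e)%N -> (n - 1 <= m)%N.
  by case: e; lia.
have p_neq_n p :
    ~~ (n %| x * y * z)%N -> (p %| x * y * z)%N -> (p == n) = false.
  by move=> nd pd; apply: contraNF nd => /eqP <-.
split; [|split; [|split]].
- by split=> p pp op pd; apply: leq_subn1; [exact: Ix|exact: Iy|exact: Iz].
- move=> nd; split=> p pp op pd.
  + by move: (Ix p pp op pd); rewrite p_neq_n ?addn0 // !dvdn_mulr.
  + by move: (Iy p pp op pd); rewrite p_neq_n ?addn0 // dvdn_mulr ?dvdn_mull.
  + by move: (Iz p pp op pd); rewrite p_neq_n ?addn0 // dvdn_mull.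
- by split; [exact: IIIz|exact: IIIx|exact: IIIy].
- split=> p pp pd pab; apply: leq_subn1; [exact: IVx|exact: IVy|exact: IVz].
Qed.
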